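(* For every 3-periodic of $\mathcal{E}$, the interior angles $\theta^\dagger_{1,1},\theta^\dagger_{1,2},\theta^\dagger_{1,3}$ of the focus-inversive triangle satisfy \[\sum_{i=1}^3\cos\theta^\dagger_{1,i}=\frac{\delta\,(a^2+c^2-\delta)}{a^2c^2};\] in particular this sum is invariant over the family (and independent of $\rho$).
   Context: Let $a>b>0$ and let $\mathcal{E}$ be the ellipse $x^2/a^2+y^2/b^2=1$. Set $c=\sqrt{a^2-b^2}$, $\delta=\sqrt{a^4-a^2b^2+b^4}$, and let the foci be $f_1=(-c,0)$, $f_2=(c,0)$. A 3-periodic is a triangle $P_1P_2P_3$ with vertices on $\mathcal{E}$ such that at each vertex the normal to $\mathcal{E}$ bisects the angle formed by the two sides meeting at that vertex; these form a one-parameter family (one through every point of $\mathcal{E}$). Fix $\rho>0$; the focus-inversive triangle has vertices $P_i^\dagger=f_1+(\rho/d_{1,i})^2(P_i-f_1)$, $d_{1,i}=|P_i-f_1|$. *)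

From Stdlib Require Import Reals.
Open Scope R_scope.

Definition pt := (R * R)%type.
Definition vsub (p q : pt) : pt := (fst p - fst q, snd p - snd q).
Definition vadd (p q : pt) : pt := (fst p + fst q, snd p + snd q).
Definition vscale (k : R) (p : pt) : pt := (k * fst p, k * snd p).
Definition dot (p q : pt) : R := fst p * fst q + snd p * snd q.
Definition norm (p : pt) : R := sqrt (dot p p).
Definition dist (p q : pt) : R := norm (vsub p q).

Definition vangle (u v : pt) : R := acos (dot u v / (norm u * norm v)).

Definition angle_at (P Q S : pt) : R := vangle (vsub Q P) (vsub S P).

Definition on_ellipse (a b : R) (p : pt) : Prop :=
  (fst p)^2 / a^2 + (snd p)^2 / b^2 = 1.

Definition ellipse_normal (a b : R) (p : pt) : pt :=
  (fst p / a^2, snd p / b^2).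

Definition normal_bisects (a b : R) (P Q S : pt) : Prop :=
  vangle (ellipse_normal a b P) (vsub Q P) = vangle (ellipse_normal a b P) (vsub S P).

Definition three_periodic (a b : R) (P1 P2 P3 : pt) : Prop :=
  on_ellipse a b P1 /\ on_ellipse a b P2 /\ on_ellipse a b P3 /\
  P1 <> P2 /\ P2 <> P3 /\ P3 <> P1 /\
  normal_bisects a b P1 P2 P3 /\
  normal_bisects a b P2 P3 P1 /\
  normal_bisects a b P3 P1 P2.

Definition focus1 (a b : R) : pt := (- sqrt (a^2 - b^2), 0).

Definition invert (f : pt) (rho : R) (P : pt) : pt :=
  vadd f (vscale ((rho / dist P f)^2) (vsub P f)).

(* Write the vertices as P_i = (a C_i, b S_i) with (C_i, S_i) on the unit
   circle and gap_ij = 1 - C_i C_j - S_i S_j (half the squared chord of the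
   unit circle); e = c/a is the eccentricity.
   1. Bisection by the normal at P_i says gap_ij / |P_i P_j| is the same on
      all three sides.  Since |P_i P_j|^2 = gap_ij (a^2 + b^2 - c^2 (C_i C_j
      - S_i S_j)), every side satisfies one conic relation
      (1 - kappa) C_i C_j + (1 + kappa) S_i S_j = mu.
   2. In complex coordinates z_i = C_i + i S_i the conic relation is a
      symmetric biquadratic; Vieta for the partners of a vertex and
      conjugation on the unit circle give the closure condition
      kappa^2 = 1 + 2 mu, which pins down the caustic:
      kappa c^2 = 2 delta - a^2 - b^2.
   3. Inversion in f1 scales |P_i P_j| by rho^2 / (|P_i f1| |P_j f1|), and
      |P_i f1| = a (1 + e C_i); so the inversive triangle has sides
      proportional to L_i = gap_jk (1 + e C_i).
   4. For any triangle, sum cos = 1 + prod (L_j + L_k - L_i) / (2 L1 L2 L3).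
      An identity on the unit circle (checked through an explicit polynomial
      certificate) turns this into 1 + T(kappa, e) / (4 e^2), which the
      caustic value rewrites as delta (a^2 + c^2 - delta) / (a^2 c^2). *)

From Pilot Require Import Defs.
From Stdlib Require Import Reals Lra Psatz Nsatz.
From Coquelicot Require Coquelicot.
(* Stdlib.Reals also exports a [dist]; re-import so that [dist] is the one of Defs. *)
Import Defs.
Open Scope R_scope.

Lemma dot_self_nonneg (u : pt) : 0 <= dot u u.
Proof. unfold dot. nra. Qed.

Lemma norm_sq (u : pt) : norm u ^ 2 = dot u u.
Proof. unfold norm. apply pow2_sqrt, dot_self_nonneg. Qed.

Lemma norm_unique (u : pt) (L : R) : 0 <= L -> dot u u = L ^ 2 -> norm u = L.
Proof. intros HL Hu. unfold norm. rewrite Hu. now apply sqrt_pow2. Qed.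

Lemma dist_sym (P Q : pt) : dist P Q = dist Q P.
Proof. unfold dist, norm, vsub, dot; simpl. f_equal. ring. Qed.

Lemma norm_pos (u : pt) : u <> (0, 0) -> 0 < norm u.
Proof.
intros Hu. unfold norm. apply sqrt_lt_R0. destruct u as [x y]. unfold dot; simpl.
destruct (Req_dec x 0), (Req_dec y 0); subst; try (exfalso; now apply Hu);
  [assert (0 < y²) | assert (0 < x²) | assert (0 < x²)];
  try (apply Rsqr_pos_lt; lra); unfold Rsqr in *; nra.
Qed.

Lemma dist_pos (P Q : pt) : P <> Q -> 0 < dist P Q.
Proof.
intros HPQ. apply norm_pos. destruct P as [x y], Q as [x' y']. unfold vsub; simpl.
intros E. pose proof (f_equal fst E) as Ex. pose proof (f_equal snd E) as Ey.
cbn [fst snd] in Ex, Ey. apply HPQ. f_equal; lra.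
Qed.

(* Cauchy-Schwarz puts the cosine ratio in [-1, 1], so acos inverts cos. *)
Lemma cos_vangle (u v : pt) :
  0 < norm u -> 0 < norm v -> cos (vangle u v) = dot u v / (norm u * norm v).
Proof.
intros Hu Hv. unfold vangle. apply cos_acos.
assert (CS : (dot u v) ^ 2 <= (norm u * norm v) ^ 2).
{ rewrite Rpow_mult_distr, !norm_sq.
  destruct u as [u1 u2], v as [v1 v2]. unfold dot; simpl.
  assert (0 <= (u1 * v2 - u2 * v1) ^ 2) by apply pow2_ge_0. nra. }
set (r := dot u v / (norm u * norm v)).
assert (Hr : r ^ 2 <= 1).
{ assert (E : r ^ 2 * (norm u * norm v) ^ 2 = (dot u v) ^ 2) by (unfold r; field; lra).
  assert (0 < (norm u * norm v) ^ 2) by (apply pow_lt; nra). nra. }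
split; nra.
Qed.

Lemma cos_angle_at (A B C : pt) : A <> B -> A <> C ->
  cos (angle_at A B C) =
  (dist A B ^ 2 + dist A C ^ 2 - dist B C ^ 2) / (2 * dist A B * dist A C).
Proof.
intros HAB HAC. pose proof (dist_pos _ _ HAB). pose proof (dist_pos _ _ HAC).
unfold angle_at. rewrite (dist_sym A B), (dist_sym A C) in *. unfold dist in *.
rewrite cos_vangle by assumption. rewrite !norm_sq.
replace (dot (vsub B A) (vsub C A)) with
  ((dot (vsub B A) (vsub B A) + dot (vsub C A) (vsub C A) - dot (vsub B C) (vsub B C)) / 2)
  by (destruct A, B, C; unfold dot, vsub; simpl; field).
field. lra.
Qed.

(* The cosine sum of a triangle depends only on the shape of its sides:
   sum cos = 1 + r/R = 1 + prod (L_j + L_k - L_i) / (2 L1 L2 L3). *)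
Lemma triangle_cos_sum (Q1 Q2 Q3 : pt) (lam L1 L2 L3 : R) :
  0 < lam -> 0 < L1 -> 0 < L2 -> 0 < L3 ->
  dist Q2 Q3 = lam * L1 -> dist Q3 Q1 = lam * L2 -> dist Q1 Q2 = lam * L3 ->
  cos (angle_at Q1 Q2 Q3) + cos (angle_at Q2 Q3 Q1) + cos (angle_at Q3 Q1 Q2)
  = 1 + (L2 + L3 - L1) * (L3 + L1 - L2) * (L1 + L2 - L3) / (2 * L1 * L2 * L3).
Proof.
intros Hlam H1 H2 H3 D23 D31 D12.
assert (N : forall P Q L, 0 < L -> dist P Q = lam * L -> P <> Q).
{ intros [x y] Q L HL HPQ E. subst Q. unfold dist, norm, vsub, dot in HPQ; simpl in HPQ.
  replace ((x - x) * (x - x) + (y - y) * (y - y)) with 0 in HPQ by ring.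
  rewrite sqrt_0 in HPQ. nra. }
pose proof (N _ _ _ H1 D23). pose proof (N _ _ _ H2 D31). pose proof (N _ _ _ H3 D12).
rewrite !cos_angle_at by (auto; intros E; subst; auto).
rewrite (dist_sym Q3 Q2), (dist_sym Q1 Q3), (dist_sym Q2 Q1), D23, D31, D12.
field. lra.
Qed.

Lemma dist_invert (f P P' : pt) (rho : R) : P <> f -> P' <> f ->
  dist (invert f rho P) (invert f rho P') = rho ^ 2 * dist P P' / (dist P f * dist P' f).
Proof.
intros HP HP'. pose proof (dist_pos _ _ HP) as Hd. pose proof (dist_pos _ _ HP') as Hd'.
assert (Hp : 0 <= dist P P') by apply sqrt_pos.
assert (Sq : forall X Y, dist X Y ^ 2 = dot (vsub X Y) (vsub X Y)) by (intros; apply norm_sq).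
unfold dist at 1. apply norm_unique.
{ apply Rmult_le_pos; [apply Rmult_le_pos; [apply pow2_ge_0 | lra] | ].
  apply Rlt_le, Rinv_0_lt_compat. nra. }
replace ((rho ^ 2 * dist P P' / (dist P f * dist P' f)) ^ 2) with
  (rho ^ 4 * dist P P' ^ 2 / (dist P f ^ 2 * dist P' f ^ 2)) by (field; lra).
unfold invert. replace ((rho / dist P f) ^ 2) with (rho ^ 2 / dist P f ^ 2) by (field; lra).
replace ((rho / dist P' f) ^ 2) with (rho ^ 2 / dist P' f ^ 2) by (field; lra).
assert (E : dist P f ^ 2 <> 0 /\ dist P' f ^ 2 <> 0) by (split; apply pow_nonzero; lra).
rewrite !Sq in *. revert E. destruct P, P', f. unfold vadd, vsub, vscale, dot; simpl.
intros [E E']. field. auto.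
Qed.

(* For unit vectors u, v the quantity gap = 1 - u.v equals |u - v|^2 / 2. *)
Definition gap (C S C' S' : R) : R := 1 - C * C' - S * S'.

Lemma gap_sym (C S C' S' : R) : gap C S C' S' = gap C' S' C S.
Proof. unfold gap. ring. Qed.

Lemma gap_pos (C S C' S' : R) : C ^ 2 + S ^ 2 = 1 -> C' ^ 2 + S' ^ 2 = 1 ->
  (C, S) <> (C', S') -> 0 < gap C S C' S'.
Proof.
intros H H' Hne. pose proof (dist_pos _ _ Hne) as Hd.
assert (E : dist (C, S) (C', S') ^ 2 = 2 * gap C S C' S').
{ unfold dist. rewrite norm_sq. unfold gap, dot, vsub; cbn [fst snd]. nra. }
nra.
Qed.

(* The conic relation satisfied by each side of a 3-periodic, in unit-circle
   coordinates (C, S) of its endpoints. *)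
Definition conic_rel (k mu C S C' S' : R) : Prop :=
  (1 - k) * C * C' + (1 + k) * S * S' = mu.

Lemma conic_rel_sym (k mu C S C' S' : R) :
  conic_rel k mu C S C' S' -> conic_rel k mu C' S' C S.
Proof. unfold conic_rel. intros H. rewrite <- H. ring. Qed.

Definition inversive_const (k e : R) : R :=
  let h := k * e ^ 2 + 2 - e ^ 2 in 2 * h * (1 + e ^ 2) - h ^ 2 - 4 * e ^ 2.

(* Algebra of three points on the unit circle, done with complex numbers
   z = C + i S: the conic relation becomes a symmetric biquadratic in (z, w),
   so the two partners of a vertex are the roots of a quadratic (Vieta). *)
Module UnitCircleAlgebra.
Import Coquelicot.Coquelicot.
Local Open Scope C_scope.

Lemma C_ext (x y : C) : fst x = fst y -> snd x = snd y -> x = y.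
Proof. destruct x, y; simpl; intros; subst; reflexivity. Qed.

Ltac cunfold := unfold Cminus, Cplus, Copp, Cmult, RtoC in *; simpl in *.

Lemma Cmult_reg (x y y' : C) : x <> 0 -> x * (y - y') = 0 -> y = y'.
Proof.
intros Hx H. replace y with (y' + (x * (y - y')) / x) by (field; exact Hx).
rewrite H. field. exact Hx.
Qed.

Lemma Cmult_neq0 (x y : C) : x <> 0 -> y <> 0 -> x * y <> 0.
Proof.
intros Hx Hy E. apply Hy. apply (Cmult_reg x y 0 Hx). transitivity (x * y); [ring | exact E].
Qed.

Lemma Cpow_neq0 (x : C) (n : nat) : x <> 0 -> x ^ n <> 0.
Proof.
intros Hx. induction n as [|n IH]; [exact C1_nz|]. rewrite Cpow_S. now apply Cmult_neq0.
Qed.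

Lemma Cminus_neq0 (x y : C) : x <> y -> x - y <> 0.
Proof. intros H E. apply H. apply (Cmult_reg 1); [exact C1_nz | rewrite E; ring]. Qed.

Lemma unit_neq0 (C S : R) : (C ^ 2 + S ^ 2 = 1)%R -> ((C, S) : Complex.C) <> 0.
Proof.
intros H E. pose proof (f_equal fst E) as E1. pose proof (f_equal snd E) as E2.
simpl in E1, E2. subst. lra.
Qed.

Lemma RtoC_neq0 (r : R) : r <> 0%R -> RtoC r <> 0.
Proof. intros Hr E. apply Hr. exact (f_equal fst E). Qed.

(* For z, w on the unit circle, conic_rel k mu is the vanishing of
   z^2 + w^2 - k (z^2 w^2 + 1) - 2 mu z w. *)
Definition biquad (k mu z w : C) : C := z ^ 2 + w ^ 2 - k * (z ^ 2 * w ^ 2 + 1) - 2 * mu * z * w.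

Lemma biquad_of_conic (k mu C S C' S' : R) :
  (C ^ 2 + S ^ 2 = 1)%R -> (C' ^ 2 + S' ^ 2 = 1)%R -> conic_rel k mu C S C' S' ->
  biquad k mu (C, S) (C', S') = 0.
Proof. unfold conic_rel, biquad. intros H1 H2 H. apply C_ext; cunfold; nsatz. Qed.

(* Vieta for the two partners z2, z3 of z1: their sum ... *)
Lemma partners_sum (k mu z1 z2 z3 : C) :
  biquad k mu z1 z2 = 0 -> biquad k mu z1 z3 = 0 -> z2 <> z3 ->
  (z2 + z3) * (1 - k * z1 ^ 2) = 2 * mu * z1.
Proof.
unfold biquad. intros H2 H3 Hd. apply (Cmult_reg (z2 - z3)); [now apply Cminus_neq0|].
transitivity ((z1 ^ 2 + z2 ^ 2 - k * (z1 ^ 2 * z2 ^ 2 + 1) - 2 * mu * z1 * z2)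
  - (z1 ^ 2 + z3 ^ 2 - k * (z1 ^ 2 * z3 ^ 2 + 1) - 2 * mu * z1 * z3)); [ring|].
rewrite H2, H3. ring.
Qed.

Lemma partners_prod (k mu z1 z2 z3 : C) :
  biquad k mu z1 z2 = 0 -> (z2 + z3) * (1 - k * z1 ^ 2) = 2 * mu * z1 ->
  z2 * z3 * (1 - k * z1 ^ 2) = z1 ^ 2 - k.
Proof.
unfold biquad. intros H E. apply (Cmult_reg 1); [exact C1_nz|].
transitivity (- (z1 ^ 2 + z2 ^ 2 - k * (z1 ^ 2 * z2 ^ 2 + 1) - 2 * mu * z1 * z2)
  + z2 * ((z2 + z3) * (1 - k * z1 ^ 2) - 2 * mu * z1)); [ring|].
rewrite H, E. ring.
Qed.

Lemma biquad_sym (k mu z w : C) : biquad k mu z w = biquad k mu w z.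
Proof. unfold biquad. ring. Qed.

(* The partner equations make z1, z2
   roots of k z^3 - k s1 z^2 - (1 + 2 mu) z + s1, whence k s2 = -(1 + 2 mu)
   and s1 = -k s3; conjugating (conj z = 1/z) gives s1 = s2 s3, so s2 = -k. *)
Lemma closure_relation (k mu C1 S1 C2 S2 C3 S3 : R) :
  (C1 ^ 2 + S1 ^ 2 = 1)%R -> (C2 ^ 2 + S2 ^ 2 = 1)%R -> (C3 ^ 2 + S3 ^ 2 = 1)%R ->
  (C1, S1) <> (C2, S2) -> (C1, S1) <> (C3, S3) -> (C2, S2) <> (C3, S3) ->
  conic_rel k mu C1 S1 C2 S2 -> conic_rel k mu C1 S1 C3 S3 -> conic_rel k mu C2 S2 C3 S3 ->
  k <> 0%R -> (k ^ 2 = 1 + 2 * mu)%R.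
Proof.
intros U1 U2 U3 D12 D13 D23 R12 R13 R23 Hk.
pose proof (biquad_of_conic _ _ _ _ _ _ U1 U2 R12) as B12.
pose proof (biquad_of_conic _ _ _ _ _ _ U1 U3 R13) as B13.
pose proof (biquad_of_conic _ _ _ _ _ _ U2 U3 R23) as B23.
set (z1 := (C1, S1) : C) in *. set (z2 := (C2, S2) : C) in *. set (z3 := (C3, S3) : C) in *.
pose proof (partners_sum _ _ _ _ _ B12 B13 D23) as E1.
rewrite biquad_sym in B12.
pose proof (partners_sum _ _ _ _ _ B12 B23 D13) as E2.
set (s1 := z1 + z2 + z3). set (s2 := z1 * z2 + z1 * z3 + z2 * z3). set (s3 := z1 * z2 * z3).
assert (G1 : k * z1 ^ 3 - k * s1 * z1 ^ 2 - (1 + 2 * mu) * z1 + s1 = 0).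
{ transitivity ((z2 + z3) * (1 - k * z1 ^ 2) - 2 * mu * z1); [unfold s1; ring|].
  rewrite E1. ring. }
assert (G2 : k * z2 ^ 3 - k * s1 * z2 ^ 2 - (1 + 2 * mu) * z2 + s1 = 0).
{ transitivity ((z1 + z3) * (1 - k * z2 ^ 2) - 2 * mu * z2); [unfold s1; ring|].
  rewrite E2. ring. }
assert (V2 : k * s2 = - (1 + 2 * mu)).
{ apply (Cmult_reg (z1 - z2)); [now apply Cminus_neq0|].
  transitivity (- ((k * z1 ^ 3 - k * s1 * z1 ^ 2 - (1 + 2 * mu) * z1 + s1)
    - (k * z2 ^ 3 - k * s1 * z2 ^ 2 - (1 + 2 * mu) * z2 + s1))); [unfold s1, s2; ring|].
  rewrite G1, G2. ring. }
assert (V1 : s1 = - k * s3).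
{ apply (Cmult_reg 1); [exact C1_nz|].
  transitivity ((k * z1 ^ 3 - k * s1 * z1 ^ 2 - (1 + 2 * mu) * z1 + s1)
    + (k * s2 + (1 + 2 * mu)) * z1); [unfold s1, s2, s3; ring|].
  rewrite G1, V2. ring. }
assert (Real2 : snd s2 = 0%R).
{ pose proof (f_equal snd V2) as I. cunfold. apply (Rmult_eq_reg_l k); [lra | exact Hk]. }
assert (Conj : s3 * s2 = s1).
{ set (w1 := (C1, (- S1)%R) : C). set (w2 := (C2, (- S2)%R) : C). set (w3 := (C3, (- S3)%R) : C).
  assert (W1 : z1 * w1 = 1) by (apply C_ext; unfold z1, w1; cunfold; nra).
  assert (W2 : z2 * w2 = 1) by (apply C_ext; unfold z2, w2; cunfold; nra).
  assert (W3 : z3 * w3 = 1) by (apply C_ext; unfold z3, w3; cunfold; nra).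
  assert (Cs2 : s2 = w1 * w2 + w1 * w3 + w2 * w3).
  { revert Real2. unfold s2, z1, z2, z3, w1, w2, w3. intros Real2. apply C_ext; cunfold; lra. }
  rewrite Cs2.
  transitivity ((z1 * w1) * (z2 * w2) * z3 + (z1 * w1) * (z3 * w3) * z2 + (z2 * w2) * (z3 * w3) * z1);
    [unfold s3; ring|].
  rewrite W1, W2, W3. unfold s1. ring. }
assert (Hs2 : s2 = - k).
{ apply (Cmult_reg s3).
  - unfold s3. repeat apply Cmult_neq0; now apply unit_neq0.
  - transitivity (s3 * s2 + k * s3); [ring|]. rewrite Conj, V1. ring. }
rewrite Hs2 in V2. pose proof (f_equal fst V2) as F. cunfold. lra.
Qed.

(* On the unit circle, focal_factor e z = 2 z (1 + e Re z): it carries the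
   focal distance of the ellipse point with eccentric angle arg z. *)
Definition focal_factor (e z : C) : C := e * z ^ 2 + 2 * z + e.

(* The algebraic heart of the theorem, for a vertex z1 whose partners z2, z3
   have sum s and product p given by Vieta.  S23 and P23 are A2 + A3 and
   A2 A3 (A_i = (z_j - z_k)^2 focal_factor e z_i) expanded in s, p, z1.
   After substituting s and p the claimed expression, times Q^3 D^6, is an
   explicit multiple of e^2 Q - 4 k; the quotient is recorded below. *)
Lemma invariant_certificate (z1 s p k e : C) :
  let D := 1 - k * z1 ^ 2 in
  let Q := (3 - k) * (1 + k) in
  D <> 0 -> Q <> 0 ->
  s * D = (k ^ 2 - 1) * z1 -> p * D = z1 ^ 2 - k -> e ^ 2 * Q = 4 * k ->
  let A1 := (s ^ 2 - 4 * p) * focal_factor e z1 in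
  let S23 :=
    (- 2*p*e + 2*p^2*e + 2*s*p + s^2*e - 8*z1*p - 2*z1*s*e - 2*z1*s*p*e + 2*z1^2*e -
    2*z1^2*p*e + 2*z1^2*s + z1^2*s^2*e) in
  let P23 :=
    (p^2*e^2 + 4*p^3 - 2*p^3*e^2 + p^4*e^2 + 2*s*p^2*e + 2*s*p^3*e + s^2*p^2*e^2 -
    2*z1*s*p*e^2 - 8*z1*s*p^2 + 4*z1*s*p^2*e^2 - 2*z1*s*p^3*e^2 - 4*z1*s^2*p*e -
    4*z1*s^2*p^2*e - 2*z1*s^3*p*e^2 + 2*z1^2*p*e^2 + 8*z1^2*p^2 - 4*z1^2*p^2*e^2 +
    2*z1^2*p^3*e^2 + 4*z1^2*s*p*e + 4*z1^2*s*p^2*e + z1^2*s^2*e^2 + 4*z1^2*s^2*p +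
    z1^2*s^2*p^2*e^2 + 2*z1^2*s^3*e + 2*z1^2*s^3*p*e + z1^2*s^4*e^2 - 2*z1^3*s*e^2 -
    8*z1^3*s*p + 4*z1^3*s*p*e^2 - 2*z1^3*s*p^2*e^2 - 4*z1^3*s^2*e - 4*z1^3*s^2*p*e -
    2*z1^3*s^3*e^2 + z1^4*e^2 + 4*z1^4*p - 2*z1^4*p*e^2 + z1^4*p^2*e^2 + 2*z1^4*s*e +
    2*z1^4*s*p*e + z1^4*s^2*e^2) in
  let h := k * e ^ 2 + 2 - e ^ 2 in
  let T := 2 * h * (1 + e ^ 2) - h ^ 2 - 4 * e ^ 2 in
  2 * e ^ 2 * (S23 - A1) * (A1 ^ 2 - S23 ^ 2 + 4 * P23) - T * A1 * P23 = 0.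
Proof.
intros D Q HD HQ Hs Hp He A1 S23 P23 h T.
assert (Es : s = (k ^ 2 - 1) * z1 / D) by (rewrite <- Hs; field; exact HD).
assert (Ep : p = (z1 ^ 2 - k) / D) by (rewrite <- Hp; field; exact HD).
apply (Cmult_reg (Q ^ 3 * D ^ 6)); [apply Cmult_neq0; apply Cpow_neq0; assumption|].
transitivity ((e ^ 2 * Q - 4 * k) * 2 *
   (- 324*k^3*e^3 + 54*k^3*e^5 - 324*k^4*e^3 + 108*k^4*e^5 + 540*k^5*e^3 - 36*k^5*e^5 +
    444*k^6*e^3 - 164*k^6*e^5 - 300*k^7*e^3 - 24*k^7*e^5 - 108*k^8*e^3 + 68*k^8*e^5 +
    84*k^9*e^3 + 4*k^9*e^5 - 12*k^10*e^3 - 12*k^10*e^5 + 2*k^11*e^5 + 216*z1*k^4*e^2 +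
    324*z1*k^4*e^4 + 216*z1*k^5*e^2 + 216*z1*k^5*e^4 - 360*z1*k^6*e^2 - 648*z1*k^6*e^4 -
    296*z1*k^7*e^2 - 264*z1*k^7*e^4 + 200*z1*k^8*e^2 + 448*z1*k^8*e^4 + 72*z1*k^9*e^2 +
    8*z1*k^9*e^4 - 56*z1*k^10*e^2 - 120*z1*k^10*e^4 + 8*z1*k^11*e^2 + 40*z1*k^11*e^4 -
    4*z1*k^12*e^4 + 2187*z1^2*k^2*e^3 - (729/2)*z1^2*k^2*e^5 + 2187*z1^2*k^3*e^3 -
    729*z1^2*k^3*e^5 - 3159*z1^2*k^4*e^3 + 162*z1^2*k^4*e^5 - 2835*z1^2*k^5*e^3 +
    999*z1^2*k^5*e^5 + 810*z1^2*k^6*e^3 + (675/2)*z1^2*k^6*e^5 + 522*z1^2*k^7*e^3 -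
    222*z1^2*k^7*e^5 + 462*z1^2*k^8*e^3 - 164*z1^2*k^8*e^5 + 54*z1^2*k^9*e^3 -
    86*z1^2*k^9*e^5 - 309*z1^2*k^10*e^3 + (85/2)*z1^2*k^10*e^5 + 75*z1^2*k^11*e^3 +
    39*z1^2*k^11*e^5 + 9*z1^2*k^12*e^3 - 14*z1^2*k^12*e^5 - 3*z1^2*k^13*e^3 - z1^2*k^13*e^5
    + (1/2)*z1^2*k^14*e^5 - 1674*z1^3*k^3*e^2 - 2511*z1^3*k^3*e^4 - 1674*z1^3*k^4*e^2 -
    1674*z1^3*k^4*e^4 + 2682*z1^3*k^5*e^2 + 4860*z1^3*k^5*e^4 + 2186*z1^3*k^6*e^2 +
    1938*z1^3*k^6*e^4 - 1316*z1^3*k^7*e^2 - 3067*z1^3*k^7*e^4 - 356*z1^3*k^8*e^2 +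
    124*z1^3*k^8*e^4 + 244*z1^3*k^9*e^2 + 544*z1^3*k^9*e^4 - 172*z1^3*k^10*e^2 -
    380*z1^3*k^10*e^4 + 78*z1^3*k^11*e^2 + 203*z1^3*k^11*e^4 + 14*z1^3*k^12*e^2 -
    18*z1^3*k^12*e^4 - 14*z1^3*k^13*e^2 - 28*z1^3*k^13*e^4 + 2*z1^3*k^14*e^2 +
    10*z1^3*k^14*e^4 - z1^3*k^15*e^4 - 4374*z1^4*k*e^3 + 729*z1^4*k*e^5 - 4374*z1^4*k^2*e^3
    + 1458*z1^4*k^2*e^5 + 1458*z1^4*k^3*e^3 + 486*z1^4*k^3*e^5 + 2997*z1^4*k^4*e^3 -
    (1485/2)*z1^4*k^4*e^5 + 9639*z1^4*k^5*e^3 - 2106*z1^4*k^5*e^5 + 2781*z1^4*k^6*e^3 -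
    2070*z1^4*k^6*e^5 - 10203*z1^4*k^7*e^3 + 1237*z1^4*k^7*e^5 - 846*z1^4*k^8*e^3 +
    (3683/2)*z1^4*k^8*e^5 + 3648*z1^4*k^9*e^3 - 467*z1^4*k^9*e^5 - 588*z1^4*k^10*e^3 -
    510*z1^4*k^10*e^5 - 132*z1^4*k^11*e^3 + 120*z1^4*k^11*e^5 + 9*z1^4*k^12*e^3 +
    (41/2)*z1^4*k^12*e^5 - 33*z1^4*k^13*e^3 + 4*z1^4*k^13*e^5 + 21*z1^4*k^14*e^3 +
    2*z1^4*k^14*e^5 - 3*z1^4*k^15*e^3 - 3*z1^4*k^15*e^5 + (1/2)*z1^4*k^16*e^5 +
    4374*z1^5*k^2*e^2 + 6561*z1^5*k^2*e^4 + 4374*z1^5*k^3*e^2 + 4374*z1^5*k^3*e^4 -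
    4752*z1^5*k^4*e^2 - 9315*z1^5*k^4*e^4 - 3456*z1^5*k^5*e^2 - 2808*z1^5*k^5*e^4 -
    1098*z1^5*k^6*e^2 + 81*z1^5*k^6*e^4 - 2938*z1^5*k^7*e^2 - 3858*z1^5*k^7*e^4 +
    2800*z1^5*k^8*e^2 + 5669*z1^5*k^8*e^4 + 2320*z1^5*k^9*e^2 + 2080*z1^5*k^9*e^4 -
    1598*z1^5*k^10*e^2 - 3557*z1^5*k^10*e^4 - 286*z1^5*k^11*e^2 + 370*z1^5*k^11*e^4 +
    288*z1^5*k^12*e^2 + 575*z1^5*k^12*e^4 - 16*z1^5*k^13*e^2 - 168*z1^5*k^13*e^4 -
    14*z1^5*k^14*e^2 - 13*z1^5*k^14*e^4 + 2*z1^5*k^15*e^2 + 10*z1^5*k^15*e^4 - z1^5*k^16*e^4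
    + 2187*z1^6*e^3 - (729/2)*z1^6*e^5 + 2187*z1^6*k*e^3 - 729*z1^6*k*e^5 +
    12393*z1^6*k^2*e^3 - 2430*z1^6*k^2*e^5 + 3969*z1^6*k^3*e^3 - 2727*z1^6*k^3*e^5 -
    32400*z1^6*k^4*e^3 + (9477/2)*z1^6*k^4*e^5 - 5886*z1^6*k^5*e^3 + 6381*z1^6*k^5*e^5 +
    21666*z1^6*k^6*e^3 - 2630*z1^6*k^6*e^5 - 3294*z1^6*k^7*e^3 - 3062*z1^6*k^7*e^5 -
    195*z1^6*k^8*e^3 + (1163/2)*z1^6*k^8*e^5 + 2415*z1^6*k^9*e^3 - 370*z1^6*k^9*e^5 -
    4779*z1^6*k^10*e^3 + 394*z1^6*k^10*e^5 + 1053*z1^6*k^11*e^3 + 621*z1^6*k^11*e^5 +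
    1182*z1^6*k^12*e^3 - (745/2)*z1^6*k^12*e^5 - 492*z1^6*k^13*e^3 - 115*z1^6*k^13*e^5 -
    48*z1^6*k^14*e^3 + 90*z1^6*k^14*e^5 + 48*z1^6*k^15*e^3 - 6*z1^6*k^16*e^3 -
    7*z1^6*k^16*e^5 + z1^6*k^17*e^5 - 4374*z1^7*k*e^2 - 6561*z1^7*k*e^4 - 4374*z1^7*k^2*e^2
    - 4374*z1^7*k^2*e^4 - 2916*z1^7*k^3*e^2 - 2187*z1^7*k^3*e^4 - 4212*z1^7*k^4*e^2 -
    4860*z1^7*k^4*e^4 + 15336*z1^7*k^5*e^2 + 25110*z1^7*k^5*e^4 + 14904*z1^7*k^6*e^2 +
    14688*z1^7*k^6*e^4 - 12114*z1^7*k^7*e^2 - 25623*z1^7*k^7*e^4 - 6658*z1^7*k^8*e^2 -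
    3930*z1^7*k^8*e^4 + 4522*z1^7*k^9*e^2 + 10112*z1^7*k^9*e^4 + 138*z1^7*k^10*e^2 -
    2054*z1^7*k^10*e^4 - 376*z1^7*k^11*e^2 - 633*z1^7*k^11*e^4 + 216*z1^7*k^12*e^2 +
    512*z1^7*k^12*e^4 - 92*z1^7*k^13*e^2 - 246*z1^7*k^13*e^4 - 12*z1^7*k^14*e^2 +
    28*z1^7*k^14*e^4 + 14*z1^7*k^15*e^2 + 27*z1^7*k^15*e^4 - 2*z1^7*k^16*e^2 -
    10*z1^7*k^16*e^4 + z1^7*k^17*e^4 - 8748*z1^8*k*e^3 + 1458*z1^8*k*e^5 + 4374*z1^8*k^2*e^3
    + 729*z1^8*k^2*e^5 + 7290*z1^8*k^3*e^3 - 1944*z1^8*k^3*e^5 - 20250*z1^8*k^4*e^3 +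
    2160*z1^8*k^4*e^5 + 25110*z1^8*k^5*e^3 - 810*z1^8*k^5*e^5 + 21519*z1^8*k^6*e^3 -
    (15543/2)*z1^8*k^6*e^5 - 44625*z1^8*k^7*e^3 + 3851*z1^8*k^7*e^5 - 387*z1^8*k^8*e^3 +
    7502*z1^8*k^8*e^5 + 26265*z1^8*k^9*e^3 - 4313*z1^8*k^9*e^5 - 7692*z1^8*k^10*e^3 -
    (6191/2)*z1^8*k^10*e^5 - 5736*z1^8*k^11*e^3 + 2238*z1^8*k^11*e^5 + 2808*z1^8*k^12*e^3 +
    488*z1^8*k^12*e^5 + 432*z1^8*k^13*e^3 - 540*z1^8*k^13*e^5 - 393*z1^8*k^14*e^3 -
    (13/2)*z1^8*k^14*e^5 + 15*z1^8*k^15*e^3 + 63*z1^8*k^15*e^5 + 21*z1^8*k^16*e^3 -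
    6*z1^8*k^16*e^5 - 3*z1^8*k^17*e^3 - 3*z1^8*k^17*e^5 + (1/2)*z1^8*k^18*e^5 +
    1458*z1^9*e^2 + 2187*z1^9*e^4 + 1458*z1^9*k*e^2 + 1458*z1^9*k*e^4 + 9720*z1^9*k^2*e^2 +
    13851*z1^9*k^2*e^4 + 10152*z1^9*k^3*e^2 + 10368*z1^9*k^3*e^4 - 14580*z1^9*k^4*e^2 -
    26946*z1^9*k^4*e^4 - 11844*z1^9*k^5*e^2 - 10476*z1^9*k^5*e^4 + 216*z1^9*k^6*e^2 +
    6246*z1^9*k^6*e^4 - 5272*z1^9*k^7*e^2 - 8016*z1^9*k^7*e^4 + 7312*z1^9*k^8*e^2 +
    13604*z1^9*k^8*e^4 + 7328*z1^9*k^9*e^2 + 7336*z1^9*k^9*e^4 - 5544*z1^9*k^10*e^2 -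
    11980*z1^9*k^10*e^4 - 2008*z1^9*k^11*e^2 - 240*z1^9*k^11*e^4 + 1636*z1^9*k^12*e^2 +
    3458*z1^9*k^12*e^4 + 180*z1^9*k^13*e^2 - 548*z1^9*k^13*e^4 - 232*z1^9*k^14*e^2 -
    438*z1^9*k^14*e^4 + 8*z1^9*k^15*e^2 + 128*z1^9*k^15*e^4 + 14*z1^9*k^16*e^2 +
    17*z1^9*k^16*e^4 - 2*z1^9*k^17*e^2 - 10*z1^9*k^17*e^4 + z1^9*k^18*e^4 - 8748*z1^10*k*e^3
    + 1458*z1^10*k*e^5 + 4374*z1^10*k^2*e^3 + 729*z1^10*k^2*e^5 + 7290*z1^10*k^3*e^3 -
    1944*z1^10*k^3*e^5 - 20250*z1^10*k^4*e^3 + 2160*z1^10*k^4*e^5 + 25110*z1^10*k^5*e^3 -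
    810*z1^10*k^5*e^5 + 21519*z1^10*k^6*e^3 - (15543/2)*z1^10*k^6*e^5 - 44625*z1^10*k^7*e^3
    + 3851*z1^10*k^7*e^5 - 387*z1^10*k^8*e^3 + 7502*z1^10*k^8*e^5 + 26265*z1^10*k^9*e^3 -
    4313*z1^10*k^9*e^5 - 7692*z1^10*k^10*e^3 - (6191/2)*z1^10*k^10*e^5 - 5736*z1^10*k^11*e^3
    + 2238*z1^10*k^11*e^5 + 2808*z1^10*k^12*e^3 + 488*z1^10*k^12*e^5 + 432*z1^10*k^13*e^3 -
    540*z1^10*k^13*e^5 - 393*z1^10*k^14*e^3 - (13/2)*z1^10*k^14*e^5 + 15*z1^10*k^15*e^3 +
    63*z1^10*k^15*e^5 + 21*z1^10*k^16*e^3 - 6*z1^10*k^16*e^5 - 3*z1^10*k^17*e^3 -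
    3*z1^10*k^17*e^5 + (1/2)*z1^10*k^18*e^5 - 4374*z1^11*k*e^2 - 6561*z1^11*k*e^4 -
    4374*z1^11*k^2*e^2 - 4374*z1^11*k^2*e^4 - 2916*z1^11*k^3*e^2 - 2187*z1^11*k^3*e^4 -
    4212*z1^11*k^4*e^2 - 4860*z1^11*k^4*e^4 + 15336*z1^11*k^5*e^2 + 25110*z1^11*k^5*e^4 +
    14904*z1^11*k^6*e^2 + 14688*z1^11*k^6*e^4 - 12114*z1^11*k^7*e^2 - 25623*z1^11*k^7*e^4 -
    6658*z1^11*k^8*e^2 - 3930*z1^11*k^8*e^4 + 4522*z1^11*k^9*e^2 + 10112*z1^11*k^9*e^4 +
    138*z1^11*k^10*e^2 - 2054*z1^11*k^10*e^4 - 376*z1^11*k^11*e^2 - 633*z1^11*k^11*e^4 +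
    216*z1^11*k^12*e^2 + 512*z1^11*k^12*e^4 - 92*z1^11*k^13*e^2 - 246*z1^11*k^13*e^4 -
    12*z1^11*k^14*e^2 + 28*z1^11*k^14*e^4 + 14*z1^11*k^15*e^2 + 27*z1^11*k^15*e^4 -
    2*z1^11*k^16*e^2 - 10*z1^11*k^16*e^4 + z1^11*k^17*e^4 + 2187*z1^12*e^3 -
    (729/2)*z1^12*e^5 + 2187*z1^12*k*e^3 - 729*z1^12*k*e^5 + 12393*z1^12*k^2*e^3 -
    2430*z1^12*k^2*e^5 + 3969*z1^12*k^3*e^3 - 2727*z1^12*k^3*e^5 - 32400*z1^12*k^4*e^3 +
    (9477/2)*z1^12*k^4*e^5 - 5886*z1^12*k^5*e^3 + 6381*z1^12*k^5*e^5 + 21666*z1^12*k^6*e^3 -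
    2630*z1^12*k^6*e^5 - 3294*z1^12*k^7*e^3 - 3062*z1^12*k^7*e^5 - 195*z1^12*k^8*e^3 +
    (1163/2)*z1^12*k^8*e^5 + 2415*z1^12*k^9*e^3 - 370*z1^12*k^9*e^5 - 4779*z1^12*k^10*e^3 +
    394*z1^12*k^10*e^5 + 1053*z1^12*k^11*e^3 + 621*z1^12*k^11*e^5 + 1182*z1^12*k^12*e^3 -
    (745/2)*z1^12*k^12*e^5 - 492*z1^12*k^13*e^3 - 115*z1^12*k^13*e^5 - 48*z1^12*k^14*e^3 +
    90*z1^12*k^14*e^5 + 48*z1^12*k^15*e^3 - 6*z1^12*k^16*e^3 - 7*z1^12*k^16*e^5 +
    z1^12*k^17*e^5 + 4374*z1^13*k^2*e^2 + 6561*z1^13*k^2*e^4 + 4374*z1^13*k^3*e^2 +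
    4374*z1^13*k^3*e^4 - 4752*z1^13*k^4*e^2 - 9315*z1^13*k^4*e^4 - 3456*z1^13*k^5*e^2 -
    2808*z1^13*k^5*e^4 - 1098*z1^13*k^6*e^2 + 81*z1^13*k^6*e^4 - 2938*z1^13*k^7*e^2 -
    3858*z1^13*k^7*e^4 + 2800*z1^13*k^8*e^2 + 5669*z1^13*k^8*e^4 + 2320*z1^13*k^9*e^2 +
    2080*z1^13*k^9*e^4 - 1598*z1^13*k^10*e^2 - 3557*z1^13*k^10*e^4 - 286*z1^13*k^11*e^2 +
    370*z1^13*k^11*e^4 + 288*z1^13*k^12*e^2 + 575*z1^13*k^12*e^4 - 16*z1^13*k^13*e^2 -
    168*z1^13*k^13*e^4 - 14*z1^13*k^14*e^2 - 13*z1^13*k^14*e^4 + 2*z1^13*k^15*e^2 +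
    10*z1^13*k^15*e^4 - z1^13*k^16*e^4 - 4374*z1^14*k*e^3 + 729*z1^14*k*e^5 -
    4374*z1^14*k^2*e^3 + 1458*z1^14*k^2*e^5 + 1458*z1^14*k^3*e^3 + 486*z1^14*k^3*e^5 +
    2997*z1^14*k^4*e^3 - (1485/2)*z1^14*k^4*e^5 + 9639*z1^14*k^5*e^3 - 2106*z1^14*k^5*e^5 +
    2781*z1^14*k^6*e^3 - 2070*z1^14*k^6*e^5 - 10203*z1^14*k^7*e^3 + 1237*z1^14*k^7*e^5 -
    846*z1^14*k^8*e^3 + (3683/2)*z1^14*k^8*e^5 + 3648*z1^14*k^9*e^3 - 467*z1^14*k^9*e^5 -
    588*z1^14*k^10*e^3 - 510*z1^14*k^10*e^5 - 132*z1^14*k^11*e^3 + 120*z1^14*k^11*e^5 +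
    9*z1^14*k^12*e^3 + (41/2)*z1^14*k^12*e^5 - 33*z1^14*k^13*e^3 + 4*z1^14*k^13*e^5 +
    21*z1^14*k^14*e^3 + 2*z1^14*k^14*e^5 - 3*z1^14*k^15*e^3 - 3*z1^14*k^15*e^5 +
    (1/2)*z1^14*k^16*e^5 - 1674*z1^15*k^3*e^2 - 2511*z1^15*k^3*e^4 - 1674*z1^15*k^4*e^2 -
    1674*z1^15*k^4*e^4 + 2682*z1^15*k^5*e^2 + 4860*z1^15*k^5*e^4 + 2186*z1^15*k^6*e^2 +
    1938*z1^15*k^6*e^4 - 1316*z1^15*k^7*e^2 - 3067*z1^15*k^7*e^4 - 356*z1^15*k^8*e^2 +
    124*z1^15*k^8*e^4 + 244*z1^15*k^9*e^2 + 544*z1^15*k^9*e^4 - 172*z1^15*k^10*e^2 -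
    380*z1^15*k^10*e^4 + 78*z1^15*k^11*e^2 + 203*z1^15*k^11*e^4 + 14*z1^15*k^12*e^2 -
    18*z1^15*k^12*e^4 - 14*z1^15*k^13*e^2 - 28*z1^15*k^13*e^4 + 2*z1^15*k^14*e^2 +
    10*z1^15*k^14*e^4 - z1^15*k^15*e^4 + 2187*z1^16*k^2*e^3 - (729/2)*z1^16*k^2*e^5 +
    2187*z1^16*k^3*e^3 - 729*z1^16*k^3*e^5 - 3159*z1^16*k^4*e^3 + 162*z1^16*k^4*e^5 -
    2835*z1^16*k^5*e^3 + 999*z1^16*k^5*e^5 + 810*z1^16*k^6*e^3 + (675/2)*z1^16*k^6*e^5 +
    522*z1^16*k^7*e^3 - 222*z1^16*k^7*e^5 + 462*z1^16*k^8*e^3 - 164*z1^16*k^8*e^5 +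
    54*z1^16*k^9*e^3 - 86*z1^16*k^9*e^5 - 309*z1^16*k^10*e^3 + (85/2)*z1^16*k^10*e^5 +
    75*z1^16*k^11*e^3 + 39*z1^16*k^11*e^5 + 9*z1^16*k^12*e^3 - 14*z1^16*k^12*e^5 -
    3*z1^16*k^13*e^3 - z1^16*k^13*e^5 + (1/2)*z1^16*k^14*e^5 + 216*z1^17*k^4*e^2 +
    324*z1^17*k^4*e^4 + 216*z1^17*k^5*e^2 + 216*z1^17*k^5*e^4 - 360*z1^17*k^6*e^2 -
    648*z1^17*k^6*e^4 - 296*z1^17*k^7*e^2 - 264*z1^17*k^7*e^4 + 200*z1^17*k^8*e^2 +
    448*z1^17*k^8*e^4 + 72*z1^17*k^9*e^2 + 8*z1^17*k^9*e^4 - 56*z1^17*k^10*e^2 -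
    120*z1^17*k^10*e^4 + 8*z1^17*k^11*e^2 + 40*z1^17*k^11*e^4 - 4*z1^17*k^12*e^4 -
    324*z1^18*k^3*e^3 + 54*z1^18*k^3*e^5 - 324*z1^18*k^4*e^3 + 108*z1^18*k^4*e^5 +
    540*z1^18*k^5*e^3 - 36*z1^18*k^5*e^5 + 444*z1^18*k^6*e^3 - 164*z1^18*k^6*e^5 -
    300*z1^18*k^7*e^3 - 24*z1^18*k^7*e^5 - 108*z1^18*k^8*e^3 + 68*z1^18*k^8*e^5 +
    84*z1^18*k^9*e^3 + 4*z1^18*k^9*e^5 - 12*z1^18*k^10*e^3 - 12*z1^18*k^10*e^5 +
    2*z1^18*k^11*e^5)).
- unfold A1, S23, P23, T, h, focal_factor. rewrite Es, Ep. unfold D, Q. field. exact HD.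
- rewrite He. ring.
Qed.

Lemma invariant_of_partners (z1 z2 z3 k e : C) :
  1 - k * z1 ^ 2 <> 0 -> (3 - k) * (1 + k) <> 0 ->
  (z2 + z3) * (1 - k * z1 ^ 2) = (k ^ 2 - 1) * z1 ->
  z2 * z3 * (1 - k * z1 ^ 2) = z1 ^ 2 - k ->
  e ^ 2 * ((3 - k) * (1 + k)) = 4 * k ->
  let A1 := (z2 - z3) ^ 2 * focal_factor e z1 in
  let A2 := (z3 - z1) ^ 2 * focal_factor e z2 in
  let A3 := (z1 - z2) ^ 2 * focal_factor e z3 in
  let h := k * e ^ 2 + 2 - e ^ 2 in
  let T := 2 * h * (1 + e ^ 2) - h ^ 2 - 4 * e ^ 2 in
  2 * e ^ 2 * (A2 + A3 - A1) * (A3 + A1 - A2) * (A1 + A2 - A3) = T * A1 * A2 * A3.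
Proof.
intros HD HQ Hs Hp He A1 A2 A3 h T.
pose proof (invariant_certificate z1 (z2 + z3) (z2 * z3) k e HD HQ Hs Hp He) as K.
cbv zeta in K.
apply (Cmult_reg 1); [exact C1_nz|].
match type of K with ?l = _ => transitivity l end.
- unfold A1, A2, A3, T, h. unfold focal_factor. ring.
- rewrite K. ring.
Qed.

Lemma side_factor (e Ci Si Cj Sj Ck Sk : R) :
  (Ci ^ 2 + Si ^ 2 = 1)%R -> (Cj ^ 2 + Sj ^ 2 = 1)%R -> (Ck ^ 2 + Sk ^ 2 = 1)%R ->
  (((Cj, Sj) : C) - (Ck, Sk)) ^ 2 * focal_factor e (Ci, Si)
  = -4 * (Ci, Si) * (Cj, Sj) * (Ck, Sk) * RtoC (gap Cj Sj Ck Sk * (1 + e * Ci)).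
Proof. unfold focal_factor, gap. intros Hi Hj Hk. apply C_ext; cunfold; nsatz. Qed.

(* The invariant for three distinct points of the unit circle in conic
   relation once closure holds and k is tied to e:
   2 e^2 prod (L_j + L_k - L_i) = T(k, e) L1 L2 L3, obtained by dividing the
   symmetric complex identity by m^3. *)
Lemma inversive_invariant (k mu e C1 S1 C2 S2 C3 S3 : R) :
  (C1 ^ 2 + S1 ^ 2 = 1)%R -> (C2 ^ 2 + S2 ^ 2 = 1)%R -> (C3 ^ 2 + S3 ^ 2 = 1)%R ->
  (C2, S2) <> (C3, S3) ->
  conic_rel k mu C1 S1 C2 S2 -> conic_rel k mu C1 S1 C3 S3 ->
  (k ^ 2 = 1 + 2 * mu)%R -> (0 < k < 1)%R -> (e ^ 2 * ((3 - k) * (1 + k)) = 4 * k)%R ->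
  let L1 := (gap C2 S2 C3 S3 * (1 + e * C1))%R in
  let L2 := (gap C3 S3 C1 S1 * (1 + e * C2))%R in
  let L3 := (gap C1 S1 C2 S2 * (1 + e * C3))%R in
  (2 * e ^ 2 * (L2 + L3 - L1) * (L3 + L1 - L2) * (L1 + L2 - L3)
   = inversive_const k e * L1 * L2 * L3)%R.
Proof.
intros U1 U2 U3 D23 R12 R13 Hcl Hk He L1 L2 L3.
pose proof (biquad_of_conic _ _ _ _ _ _ U1 U2 R12) as B12.
pose proof (biquad_of_conic _ _ _ _ _ _ U1 U3 R13) as B13.
set (z1 := (C1, S1) : C) in *. set (z2 := (C2, S2) : C) in *. set (z3 := (C3, S3) : C) in *.
pose proof (partners_sum _ _ _ _ _ B12 B13 D23) as Hs.
pose proof (partners_prod _ _ _ _ _ B12 Hs) as Hp.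
replace (2 * RtoC mu) with (RtoC k ^ 2 - 1) in Hs by (apply C_ext; cunfold; nra).
assert (HD : 1 - RtoC k * z1 ^ 2 <> 0).
{ intros E. pose proof (f_equal fst E) as F1. pose proof (f_equal snd E) as F2.
  unfold z1 in F1, F2. cunfold. nra. }
assert (HQ : (3 - RtoC k) * (1 + RtoC k) <> 0).
{ intros E. pose proof (f_equal fst E) as F. cunfold. nra. }
assert (HeC : RtoC e ^ 2 * ((3 - RtoC k) * (1 + RtoC k)) = 4 * RtoC k).
{ apply C_ext; cunfold; [rewrite <- He; ring | ring]. }
pose proof (invariant_of_partners z1 z2 z3 (RtoC k) (RtoC e) HD HQ Hs Hp HeC) as K.
cbv zeta in K. unfold z1, z2, z3 in K.
rewrite !side_factor in K by assumption. fold L1 L2 L3 z1 z2 z3 in K.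
set (m := -4 * z1 * z2 * z3).
assert (Hm : m <> 0).
{ unfold m. repeat apply Cmult_neq0; try (now apply unit_neq0).
  apply RtoC_neq0. lra. }
apply RtoC_inj, (Cmult_reg (m ^ 3)); [now apply Cpow_neq0|].
match type of K with ?l = ?r => transitivity (l - r) end.
- unfold inversive_const. repeat rewrite ?RtoC_minus, ?RtoC_mult, ?RtoC_plus, ?RtoC_pow.
  unfold m. ring.
- rewrite K. ring.
Qed.

End UnitCircleAlgebra.

(* Geometry of the ellipse x^2/a^2 + y^2/b^2 = 1, with c^2 = a^2 - b^2 and
   delta^2 = a^4 - a^2 b^2 + b^4. *)
Section Ellipse.

Variables a b : R.
Hypothesis b_pos : 0 < b.
Hypothesis b_lt_a : b < a.

Definition polar_val (P Q : pt) : R := 1 - fst P * fst Q / a ^ 2 - snd P * snd Q / b ^ 2.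

Lemma normal_dot (P Q : pt) : on_ellipse a b P ->
  dot (ellipse_normal a b P) (vsub Q P) = - polar_val P Q.
Proof.
destruct P as [x y]. unfold on_ellipse, ellipse_normal, polar_val, dot, vsub; cbn [fst snd].
intros HP. rewrite <- HP. field. lra.
Qed.

Lemma ellipse_normal_pos (P : pt) : on_ellipse a b P -> 0 < norm (ellipse_normal a b P).
Proof.
intros HP. apply norm_pos. destruct P as [x y].
unfold on_ellipse, ellipse_normal in *; cbn [fst snd] in *. intros E.
pose proof (f_equal fst E) as Ex. pose proof (f_equal snd E) as Ey. cbn [fst snd] in Ex, Ey.
assert (x = 0) by (replace x with (x / a ^ 2 * a ^ 2) by (field; lra); rewrite Ex; ring).
assert (y = 0) by (replace y with (y / b ^ 2 * b ^ 2) by (field; lra); rewrite Ey; ring).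
subst. unfold Rdiv in HP. lra.
Qed.

Lemma bisector_ratio (P Q S : pt) : on_ellipse a b P -> Q <> P -> S <> P ->
  normal_bisects a b P Q S -> polar_val P Q * dist P S = polar_val P S * dist P Q.
Proof.
intros HP HQ HS Hbis. apply (f_equal cos) in Hbis.
pose proof (ellipse_normal_pos P HP) as Hn.
pose proof (dist_pos _ _ HQ) as Hq. pose proof (dist_pos _ _ HS) as Hs.
unfold dist in Hq, Hs. rewrite !cos_vangle, !normal_dot in Hbis by assumption.
rewrite (dist_sym P Q), (dist_sym P S). unfold dist.
set (n := norm (ellipse_normal a b P)) in *.
apply (Rmult_eq_reg_r (/ (n * norm (vsub Q P) * norm (vsub S P)))).
- replace (polar_val P Q * norm (vsub S P) * / (n * norm (vsub Q P) * norm (vsub S P)))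
    with (- (- polar_val P Q / (n * norm (vsub Q P)))) by (field; lra).
  rewrite Hbis. field. lra.
- apply Rinv_neq_0_compat, Rgt_not_eq. repeat apply Rmult_lt_0_compat; assumption.
Qed.

Lemma ellipse_param (P : pt) : on_ellipse a b P ->
  exists C S, P = (a * C, b * S) /\ C ^ 2 + S ^ 2 = 1.
Proof.
destruct P as [x y]. unfold on_ellipse; cbn [fst snd]. intros HP.
exists (x / a), (y / b). split.
- f_equal; field; lra.
- rewrite <- HP. field. lra.
Qed.

Lemma polar_val_param (C S C' S' : R) :
  polar_val (a * C, b * S) (a * C', b * S') = gap C S C' S'.
Proof. unfold polar_val, gap; cbn [fst snd]. field. lra. Qed.

Lemma chord_sq (C S C' S' : R) : C ^ 2 + S ^ 2 = 1 -> C' ^ 2 + S' ^ 2 = 1 ->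
  dist (a * C, b * S) (a * C', b * S') ^ 2
  = gap C S C' S' * (a ^ 2 + b ^ 2 - (a ^ 2 - b ^ 2) * (C * C' - S * S')).
Proof.
intros H H'. unfold dist. rewrite norm_sq. unfold gap, dot, vsub; cbn [fst snd].
apply Rminus_diag_uniq.
replace (_ - _) with ((b ^ 2 - S' ^ 2 * b ^ 2 + S' ^ 2 * a ^ 2) * (C ^ 2 + S ^ 2 - 1)
  + (a ^ 2 + C ^ 2 * b ^ 2 - C ^ 2 * a ^ 2) * (C' ^ 2 + S' ^ 2 - 1)) by ring.
rewrite H, H'. ring.
Qed.

Lemma focal_dist (C S : R) : C ^ 2 + S ^ 2 = 1 ->
  dist (a * C, b * S) (focus1 a b) = a + sqrt (a ^ 2 - b ^ 2) * C.
Proof.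
intros H. set (c := sqrt (a ^ 2 - b ^ 2)).
assert (Hc2 : c ^ 2 = a ^ 2 - b ^ 2) by (apply pow2_sqrt; nra).
assert (Hc : 0 <= c < a) by (split; [apply sqrt_pos | nra]).
unfold dist. apply norm_unique.
- assert (C ^ 2 <= 1) by nra. nra.
- unfold focus1, dot, vsub; cbn [fst snd]. fold c.
  apply Rminus_diag_uniq.
  replace (_ - _) with ((a ^ 2 - c ^ 2) * (C ^ 2 + S ^ 2 - 1) - (a ^ 2 - c ^ 2 - b ^ 2) * S ^ 2) by ring.
  rewrite H, Hc2. ring.
Qed.

(* The same K on all three sides is what makes the
   sides of a 3-periodic tangent to a common confocal caustic. *)
Lemma conic_of_ratio (K C S C' S' : R) : C ^ 2 + S ^ 2 = 1 -> C' ^ 2 + S' ^ 2 = 1 ->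
  (C, S) <> (C', S') -> gap C S C' S' ^ 2 = K * dist (a * C, b * S) (a * C', b * S') ^ 2 ->
  conic_rel (K * (a ^ 2 - b ^ 2)) (1 - K * (a ^ 2 + b ^ 2)) C S C' S'.
Proof.
intros H H' Hne HK. pose proof (gap_pos _ _ _ _ H H' Hne) as Hg.
rewrite chord_sq in HK by assumption.
assert (E : gap C S C' S' = K * (a ^ 2 + b ^ 2 - (a ^ 2 - b ^ 2) * (C * C' - S * S'))).
{ apply (Rmult_eq_reg_l (gap C S C' S')); [|lra]. rewrite <- Rmult_assoc, (Rmult_comm _ K), Rmult_assoc.
  rewrite <- HK. ring. }
unfold conic_rel, gap in *. lra.
Qed.

(* Poncelet closure forces kappa^2 = 1 + 2 mu; solving for K identifies the
   caustic: K c^4 = 2 delta - a^2 - b^2. *)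
Lemma caustic_parameter (K : R) : 0 < K ->
  (K * (a ^ 2 - b ^ 2)) ^ 2 = 1 + 2 * (1 - K * (a ^ 2 + b ^ 2)) ->
  K * (a ^ 2 - b ^ 2) ^ 2 = 2 * sqrt (a ^ 4 - a ^ 2 * b ^ 2 + b ^ 4) - a ^ 2 - b ^ 2.
Proof.
intros HK Hcl. set (delta := sqrt (a ^ 4 - a ^ 2 * b ^ 2 + b ^ 4)).
assert (Hd2 : delta ^ 2 = a ^ 4 - a ^ 2 * b ^ 2 + b ^ 4) by (apply pow2_sqrt; nra).
assert (Hd : 0 <= delta) by apply sqrt_pos.
set (u := K * (a ^ 2 - b ^ 2) ^ 2 + a ^ 2 + b ^ 2).
assert (Hu2 : u ^ 2 = (2 * delta) ^ 2).
{ replace (u ^ 2) with ((a ^ 2 - b ^ 2) ^ 2 * ((K * (a ^ 2 - b ^ 2)) ^ 2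
    - (1 + 2 * (1 - K * (a ^ 2 + b ^ 2)))) + (a ^ 2 + b ^ 2) ^ 2 + 3 * (a ^ 2 - b ^ 2) ^ 2)
    by (unfold u; ring).
  rewrite Hcl. nra. }
assert (0 < u) by (unfold u; assert (0 < K * (a ^ 2 - b ^ 2) ^ 2) by (apply Rmult_lt_0_compat; [lra | apply pow_lt; nra]); nra).
enough (u = 2 * delta) by (unfold u in *; lra).
nra.
Qed.

Lemma kappa_eccentricity (K : R) : 0 < K ->
  K * (a ^ 2 - b ^ 2) ^ 2 = 2 * sqrt (a ^ 4 - a ^ 2 * b ^ 2 + b ^ 4) - a ^ 2 - b ^ 2 ->
  let kappa := K * (a ^ 2 - b ^ 2) in
  let e := sqrt (a ^ 2 - b ^ 2) / a in
  0 < kappa < 1 /\ e ^ 2 * ((3 - kappa) * (1 + kappa)) = 4 * kappa.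
Proof.
intros HK Hcau kappa e. set (delta := sqrt (a ^ 4 - a ^ 2 * b ^ 2 + b ^ 4)) in *.
assert (Hd2 : delta ^ 2 = a ^ 4 - a ^ 2 * b ^ 2 + b ^ 4) by (apply pow2_sqrt; nra).
assert (Hd : 0 <= delta) by apply sqrt_pos.
assert (Hc2 : sqrt (a ^ 2 - b ^ 2) ^ 2 = a ^ 2 - b ^ 2) by (apply pow2_sqrt; nra).
assert (Hba : 0 < a ^ 2 - b ^ 2) by nra.
assert (Hw : kappa * (a ^ 2 - b ^ 2) = 2 * delta - a ^ 2 - b ^ 2) by (unfold kappa; lra).
repeat split.
- unfold kappa. apply Rmult_lt_0_compat; lra.
- assert (0 < b ^ 2 * (a ^ 2 - b ^ 2)) by (apply Rmult_lt_0_compat; nra).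
  assert (delta < a ^ 2) by (assert (delta ^ 2 < (a ^ 2) ^ 2) by (rewrite Hd2; nra); nra).
  apply (Rmult_lt_reg_r (a ^ 2 - b ^ 2)); lra.
- unfold e. replace ((sqrt (a ^ 2 - b ^ 2) / a) ^ 2) with (sqrt (a ^ 2 - b ^ 2) ^ 2 / a ^ 2)
    by (field; lra).
  rewrite Hc2.
  transitivity ((3 * (a ^ 2 - b ^ 2) - kappa * (a ^ 2 - b ^ 2))
    * ((a ^ 2 - b ^ 2) + kappa * (a ^ 2 - b ^ 2)) / (a ^ 2 * (a ^ 2 - b ^ 2))); [field; lra|].
  rewrite Hw.
  replace ((3 * (a ^ 2 - b ^ 2) - (2 * delta - a ^ 2 - b ^ 2)) * (a ^ 2 - b ^ 2 + (2 * delta - a ^ 2 - b ^ 2)))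
    with (4 * a ^ 2 * (2 * delta - a ^ 2 - b ^ 2) - 4 * (delta ^ 2 - (a ^ 4 - a ^ 2 * b ^ 2 + b ^ 4)))
    by ring.
  rewrite Hd2, <- Hw. field. lra.
Qed.

Lemma eccentricity_bounds : 0 <= sqrt (a ^ 2 - b ^ 2) / a < 1.
Proof.
assert (Hc : 0 <= sqrt (a ^ 2 - b ^ 2)) by apply sqrt_pos.
assert (Hc2 : sqrt (a ^ 2 - b ^ 2) ^ 2 = a ^ 2 - b ^ 2) by (apply pow2_sqrt; nra).
split.
- apply Rmult_le_pos; [lra | apply Rlt_le, Rinv_0_lt_compat; lra].
- assert (sqrt (a ^ 2 - b ^ 2) < a) by nra.
  apply (Rmult_lt_reg_r a); [lra|]. field_simplify; lra.
Qed.

(* A side of the inverted triangle: with D_i = 1 + e C_i (so |P_i f1| = a D_i)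
   and |P_i P_j| = gap_ij / sqrt K, inversion gives
   |Q_i Q_j| = rho^2 gap_ij / (sqrt K a^2 D_i D_j). *)
Lemma inverted_side (rho K Ci Si Cj Sj : R) : 0 < K ->
  Ci ^ 2 + Si ^ 2 = 1 -> Cj ^ 2 + Sj ^ 2 = 1 -> (Ci, Si) <> (Cj, Sj) ->
  gap Ci Si Cj Sj ^ 2 = K * dist (a * Ci, b * Si) (a * Cj, b * Sj) ^ 2 ->
  let e := sqrt (a ^ 2 - b ^ 2) / a in
  dist (invert (focus1 a b) rho (a * Ci, b * Si)) (invert (focus1 a b) rho (a * Cj, b * Sj))
  = rho ^ 2 * gap Ci Si Cj Sj / (sqrt K * a ^ 2 * (1 + e * Ci) * (1 + e * Cj)).
Proof.
intros HK Ui Uj Hne Hratio e. pose proof eccentricity_bounds as He.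
assert (Hf : forall C S, C ^ 2 + S ^ 2 = 1 -> dist (a * C, b * S) (focus1 a b) = a * (1 + e * C)).
{ intros C S U. rewrite focal_dist by assumption. unfold e. field. lra. }
assert (HD : forall C, C ^ 2 <= 1 -> 0 < 1 + e * C) by (intros C HC; fold e in He; nra).
assert (Hoff : forall C S, C ^ 2 + S ^ 2 = 1 -> (a * C, b * S) <> focus1 a b).
{ intros C S U E. pose proof (Hf C S U) as F. rewrite E in F. unfold dist, norm, vsub, dot in F.
  cbn [fst snd] in F. replace (_ * _ + _ * _) with 0 in F by ring. rewrite sqrt_0 in F.
  assert (0 < 1 + e * C) by (apply HD; nra). nra. }
pose proof (gap_pos _ _ _ _ Ui Uj Hne) as Hg.
assert (Hsk : 0 < sqrt K) by (apply sqrt_lt_R0; lra).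
assert (Hchord : dist (a * Ci, b * Si) (a * Cj, b * Sj) = gap Ci Si Cj Sj / sqrt K).
{ unfold dist at 1. apply norm_unique; [apply Rlt_le, Rdiv_lt_0_compat; lra|].
  rewrite <- norm_sq. fold (dist (a * Ci, b * Si) (a * Cj, b * Sj)).
  replace ((gap Ci Si Cj Sj / sqrt K) ^ 2) with (gap Ci Si Cj Sj ^ 2 / sqrt K ^ 2) by (field; lra).
  rewrite pow2_sqrt, Hratio by lra. field. lra. }
rewrite dist_invert, Hchord, !Hf by auto.
assert (0 < 1 + e * Ci) by (apply HD; nra). assert (0 < 1 + e * Cj) by (apply HD; nra).
field. repeat split; lra.
Qed.

(* With h = kappa e^2 + 2 - e^2 = 2 delta / a^2, the cosine sum
   1 + T/(4 e^2) is the closed form of the theorem. *)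
Lemma cos_sum_closed_form (K : R) :
  K * (a ^ 2 - b ^ 2) ^ 2 = 2 * sqrt (a ^ 4 - a ^ 2 * b ^ 2 + b ^ 4) - a ^ 2 - b ^ 2 ->
  let c := sqrt (a ^ 2 - b ^ 2) in
  let delta := sqrt (a ^ 4 - a ^ 2 * b ^ 2 + b ^ 4) in
  1 + inversive_const (K * (a ^ 2 - b ^ 2)) (c / a) / (4 * (c / a) ^ 2)
  = delta * (a ^ 2 + c ^ 2 - delta) / (a ^ 2 * c ^ 2).
Proof.
intros Hcau c delta. fold delta in Hcau.
assert (Hc2 : c ^ 2 = a ^ 2 - b ^ 2) by (apply pow2_sqrt; nra).
assert (Hc : 0 < c) by (apply sqrt_lt_R0; nra).
assert (Hh : K * (a ^ 2 - b ^ 2) * (c / a) ^ 2 + 2 - (c / a) ^ 2 = 2 * delta / a ^ 2).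
{ transitivity ((K * (a ^ 2 - b ^ 2) ^ 2 + a ^ 2 + b ^ 2) / a ^ 2).
  - replace ((c / a) ^ 2) with (c ^ 2 / a ^ 2) by (field; lra). rewrite Hc2. field. lra.
  - rewrite Hcau. field. lra. }
unfold inversive_const. cbv zeta. rewrite Hh. field. lra.
Qed.

(* Along a 3-periodic the ratio gap / chord is the same on all three sides
   (bisection at P1 and at P2); K is its square. *)
Lemma billiard_ratio (C1 S1 C2 S2 C3 S3 : R) :
  C1 ^ 2 + S1 ^ 2 = 1 -> C2 ^ 2 + S2 ^ 2 = 1 -> C3 ^ 2 + S3 ^ 2 = 1 ->
  three_periodic a b (a * C1, b * S1) (a * C2, b * S2) (a * C3, b * S3) ->
  exists K, 0 < K /\
    gap C1 S1 C2 S2 ^ 2 = K * dist (a * C1, b * S1) (a * C2, b * S2) ^ 2 /\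
    gap C2 S2 C3 S3 ^ 2 = K * dist (a * C2, b * S2) (a * C3, b * S3) ^ 2 /\
    gap C3 S3 C1 S1 ^ 2 = K * dist (a * C3, b * S3) (a * C1, b * S1) ^ 2.
Proof.
intros U1 U2 U3 (E1 & E2 & E3 & D12 & D23 & D31 & B1 & B2 & _).
pose proof (bisector_ratio _ _ _ E1 (not_eq_sym D12) D31 B1) as H1.
pose proof (bisector_ratio _ _ _ E2 (not_eq_sym D23) D12 B2) as H2.
rewrite !polar_val_param in H1, H2.
rewrite (gap_sym C2 S2 C1 S1), (dist_sym (a * C2, b * S2)) in H2.
rewrite (gap_sym C1 S1 C3 S3), (dist_sym (a * C1, b * S1) (a * C3, b * S3)) in H1.
assert (Hg : 0 < gap C1 S1 C2 S2).
{ apply gap_pos; auto. intros E. injection E as -> ->. now apply D12. }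
pose proof (dist_pos _ _ D12) as P12. pose proof (dist_pos _ _ D23) as P23.
pose proof (dist_pos _ _ D31) as P31.
set (g := gap C1 S1 C2 S2) in *. set (p := dist (a * C1, b * S1) (a * C2, b * S2)) in *.
exists ((g / p) ^ 2). repeat split.
- apply pow_lt, Rdiv_lt_0_compat; lra.
- field. lra.
- replace (gap C2 S2 C3 S3) with (g * dist (a * C2, b * S2) (a * C3, b * S3) / p)
    by (apply (Rmult_eq_reg_r p); [rewrite H2; field|]; lra).
  field. lra.
- replace (gap C3 S3 C1 S1) with (g * dist (a * C3, b * S3) (a * C1, b * S1) / p)
    by (apply (Rmult_eq_reg_r p); [rewrite <- H1; field|]; lra).
  field. lra.
Qed.

Lemma billiard_invariant (K C1 S1 C2 S2 C3 S3 : R) : 0 < K ->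
  C1 ^ 2 + S1 ^ 2 = 1 -> C2 ^ 2 + S2 ^ 2 = 1 -> C3 ^ 2 + S3 ^ 2 = 1 ->
  (C1, S1) <> (C2, S2) -> (C2, S2) <> (C3, S3) -> (C3, S3) <> (C1, S1) ->
  gap C1 S1 C2 S2 ^ 2 = K * dist (a * C1, b * S1) (a * C2, b * S2) ^ 2 ->
  gap C2 S2 C3 S3 ^ 2 = K * dist (a * C2, b * S2) (a * C3, b * S3) ^ 2 ->
  gap C3 S3 C1 S1 ^ 2 = K * dist (a * C3, b * S3) (a * C1, b * S1) ^ 2 ->
  K * (a ^ 2 - b ^ 2) ^ 2 = 2 * sqrt (a ^ 4 - a ^ 2 * b ^ 2 + b ^ 4) - a ^ 2 - b ^ 2 /\
  let e := sqrt (a ^ 2 - b ^ 2) / a in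
  let L1 := gap C2 S2 C3 S3 * (1 + e * C1) in
  let L2 := gap C3 S3 C1 S1 * (1 + e * C2) in
  let L3 := gap C1 S1 C2 S2 * (1 + e * C3) in
  2 * e ^ 2 * (L2 + L3 - L1) * (L3 + L1 - L2) * (L1 + L2 - L3)
  = inversive_const (K * (a ^ 2 - b ^ 2)) e * L1 * L2 * L3.
Proof.
intros HK U1 U2 U3 D12 D23 D31 K12 K23 K31.
pose proof (conic_of_ratio _ _ _ _ _ U1 U2 D12 K12) as R12.
pose proof (conic_of_ratio _ _ _ _ _ U2 U3 D23 K23) as R23.
pose proof (conic_rel_sym _ _ _ _ _ _ (conic_of_ratio _ _ _ _ _ U3 U1 D31 K31)) as R13.
assert (Hk0 : K * (a ^ 2 - b ^ 2) <> 0) by (apply Rgt_not_eq, Rmult_lt_0_compat; nra).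
pose proof (UnitCircleAlgebra.closure_relation _ _ _ _ _ _ _ _ U1 U2 U3 D12
  (not_eq_sym D31) D23 R12 R13 R23 Hk0) as Hcl.
pose proof (caustic_parameter K HK Hcl) as Hcau.
destruct (kappa_eccentricity K HK Hcau) as [Hk He].
split; [exact Hcau|].
exact (UnitCircleAlgebra.inversive_invariant _ _ _ _ _ _ _ _ _ U1 U2 U3 D23 R12 R13 Hcl Hk He).
Qed.

(* The theorem for vertices (a C_i, b S_i) with a common ratio K: the
   inverted triangle has sides lam L_i, so its cosine sum is
   1 + T / (4 e^2) by the invariant, i.e. the closed form. *)
Lemma inversive_cos_sum (rho K C1 S1 C2 S2 C3 S3 : R) : 0 < rho -> 0 < K ->
  C1 ^ 2 + S1 ^ 2 = 1 -> C2 ^ 2 + S2 ^ 2 = 1 -> C3 ^ 2 + S3 ^ 2 = 1 ->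
  (C1, S1) <> (C2, S2) -> (C2, S2) <> (C3, S3) -> (C3, S3) <> (C1, S1) ->
  gap C1 S1 C2 S2 ^ 2 = K * dist (a * C1, b * S1) (a * C2, b * S2) ^ 2 ->
  gap C2 S2 C3 S3 ^ 2 = K * dist (a * C2, b * S2) (a * C3, b * S3) ^ 2 ->
  gap C3 S3 C1 S1 ^ 2 = K * dist (a * C3, b * S3) (a * C1, b * S1) ^ 2 ->
  let c := sqrt (a ^ 2 - b ^ 2) in
  let delta := sqrt (a ^ 4 - a ^ 2 * b ^ 2 + b ^ 4) in
  let Q1 := invert (focus1 a b) rho (a * C1, b * S1) in
  let Q2 := invert (focus1 a b) rho (a * C2, b * S2) in
  let Q3 := invert (focus1 a b) rho (a * C3, b * S3) in
  cos (angle_at Q1 Q2 Q3) + cos (angle_at Q2 Q3 Q1) + cos (angle_at Q3 Q1 Q2)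
  = delta * (a ^ 2 + c ^ 2 - delta) / (a ^ 2 * c ^ 2).
Proof.
intros Hrho HK U1 U2 U3 D12 D23 D31 K12 K23 K31 c delta Q1 Q2 Q3.
destruct (billiard_invariant K _ _ _ _ _ _ HK U1 U2 U3 D12 D23 D31 K12 K23 K31)
  as [Hcau Inv].
pose proof (cos_sum_closed_form K Hcau) as Closed.
pose proof (inverted_side rho K _ _ _ _ HK U1 U2 D12 K12) as Q12.
pose proof (inverted_side rho K _ _ _ _ HK U2 U3 D23 K23) as Q23.
pose proof (inverted_side rho K _ _ _ _ HK U3 U1 D31 K31) as Q31.
pose proof eccentricity_bounds as Hecc.
cbv zeta in Inv, Closed, Q12, Q23, Q31. fold c delta in Inv, Closed, Q12, Q23, Q31, Hecc.
fold Q1 Q2 Q3 in Q12, Q23, Q31. set (e := c / a) in *.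
assert (HD : forall C S, C ^ 2 + S ^ 2 = 1 -> 0 < 1 + e * C) by (intros C S U; nra).
pose proof (HD _ _ U1). pose proof (HD _ _ U2). pose proof (HD _ _ U3).
pose proof (gap_pos _ _ _ _ U1 U2 D12). pose proof (gap_pos _ _ _ _ U2 U3 D23).
pose proof (gap_pos _ _ _ _ U3 U1 D31).
assert (Hsk : 0 < sqrt K) by (apply sqrt_lt_R0; lra).
assert (He0 : 0 < e) by (unfold e, c; apply Rdiv_lt_0_compat; [apply sqrt_lt_R0; nra | lra]).
set (L1 := gap C2 S2 C3 S3 * (1 + e * C1)) in *.
set (L2 := gap C3 S3 C1 S1 * (1 + e * C2)) in *.
set (L3 := gap C1 S1 C2 S2 * (1 + e * C3)) in *.
assert (0 < L1 /\ 0 < L2 /\ 0 < L3) as (HL1 & HL2 & HL3)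
  by (unfold L1, L2, L3; repeat split; apply Rmult_lt_0_compat; assumption).
set (lam := rho ^ 2 / (sqrt K * a ^ 2 * (1 + e * C1) * (1 + e * C2) * (1 + e * C3))).
rewrite (triangle_cos_sum Q1 Q2 Q3 lam L1 L2 L3); auto.
- rewrite <- Closed. f_equal.
  replace (inversive_const (K * (a ^ 2 - b ^ 2)) e)
    with (2 * e ^ 2 * (L2 + L3 - L1) * (L3 + L1 - L2) * (L1 + L2 - L3) / (L1 * L2 * L3))
    by (rewrite Inv; field; repeat split; lra).
  field. repeat split; lra.
- unfold lam. apply Rdiv_lt_0_compat; [nra | repeat apply Rmult_lt_0_compat; nra].
- rewrite Q23. unfold lam, L1. field. repeat split; lra.
- rewrite Q31. unfold lam, L2. field. repeat split; lra.
- rewrite Q12. unfold lam, L3. field. repeat split; lra.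
Qed.

End Ellipse.

Theorem mainTheorem7 (a b rho : R) (P1 P2 P3 : pt) :
  0 < b -> b < a -> 0 < rho ->
  three_periodic a b P1 P2 P3 ->
  let c := sqrt (a^2 - b^2) in
  let delta := sqrt (a^4 - a^2 * b^2 + b^4) in
  let f1 := focus1 a b in
  let Q1 := invert f1 rho P1 in
  let Q2 := invert f1 rho P2 in
  let Q3 := invert f1 rho P3 in
  cos (angle_at Q1 Q2 Q3) + cos (angle_at Q2 Q3 Q1) + cos (angle_at Q3 Q1 Q2)
  = delta * (a^2 + c^2 - delta) / (a^2 * c^2).
Proof.
intros Hb Hba Hrho Hper c delta f1 Q1 Q2 Q3.
pose proof Hper as (E1 & E2 & E3 & D12 & D23 & D31 & _).
destruct (ellipse_param a b Hb Hba P1 E1) as (C1 & S1 & -> & U1).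
destruct (ellipse_param a b Hb Hba P2 E2) as (C2 & S2 & -> & U2).
destruct (ellipse_param a b Hb Hba P3 E3) as (C3 & S3 & -> & U3).
destruct (billiard_ratio a b Hb Hba _ _ _ _ _ _ U1 U2 U3 Hper) as (K & HK & K12 & K23 & K31).
assert (Hcoord : forall C S C' S', (a * C, b * S) <> (a * C', b * S') -> (C, S) <> (C', S'))
  by (intros C S C' S' Hne E; apply Hne; injection E as -> ->; reflexivity).
exact (inversive_cos_sum a b Hb Hba rho K _ _ _ _ _ _ Hrho HK U1 U2 U3
  (Hcoord _ _ _ _ D12) (Hcoord _ _ _ _ D23) (Hcoord _ _ _ _ D31) K12 K23 K31).
Qed.
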